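(* Let $G=K_{r_1,\dots,r_k}$ with $r_i\ge 7$ for every $i\in[k]$, and suppose $G$ does not have a good bisection. Then for every edge $e\in E(G)$, the graph $G-e$ does not have a good bisection.
   Context: A bisection of a graph $G$ is a bipartite spanning subgraph $H$ of $G$ with a bipartition into two partition sets (every edge of $H$ joining the two sets) whose sizes differ by at most one. It is good if $2d_H(v)\ge d_G(v)-1$ for every $v\in V(G)$. *)

(* Graphs are simple graphs given by a symmetric
   irreflexive adjacency relation on a finite vertex type. *)
From mathcomp Require Import all_boot.
Set Implicit Arguments. Unset Strict Implicit. Unset Printing Implicit Defensive.

Section Graphs.
Variable T : finType.

Definition deg (g : rel T) (v : T) : nat := #|[set u | g v u]|.

Definition spanning_subgraph (h g : rel T) : Prop :=
  (forall u v, h u v = h v u) /\ (forall u v, h u v -> g u v).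

Definition is_bisection (g h : rel T) (A : {set T}) : Prop :=
  [/\ spanning_subgraph h g,
      (forall u v, h u v -> (u \in A) != (v \in A)),
      #|A| <= #|~: A|.+1 & #|~: A| <= #|A|.+1].

(* good: 2 d_H(v) >= d_G(v) - 1 for all v (truncated subtraction is harmless) *)
Definition good (g h : rel T) : Prop :=
  forall v, (deg g v).-1 <= 2 * deg h v.

Definition has_good_bisection (g : rel T) : Prop :=
  exists (h : rel T) (A : {set T}), is_bisection g h A /\ good g h.

Definition del_edge (g : rel T) (x y : T) : rel T :=
  fun u v => g u v && ~~ (((u == x) && (v == y)) || ((u == y) && (v == x))).

End Graphs.

(* The complete multipartite graph K_{r_1,...,r_k}: vertices are pairs
   (i, j) with i < k and j < r i; two vertices are adjacent iff they lie
   in different parts. *)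
Definition Kmp_vertex (k : nat) (r : 'I_k -> nat) : finType :=
  {i : 'I_k & 'I_(r i)}.

Definition Kmp (k : nat) (r : 'I_k -> nat) : rel (Kmp_vertex r) :=
  fun u v => tag u != tag v.
Arguments Kmp_vertex {k} r.
Arguments Kmp {k} r.

From mathcomp Require Import all_boot zify.
Set Implicit Arguments. Unset Strict Implicit. Unset Printing Implicit Defensive.

(* We prove the contrapositive: if H is a good bisection of G - xy with parts A
   and V \ A, then the graph of all edges of G crossing the partition is a good
   bisection of G. This can only increase d_H, and d_G = d_{G-xy} off {x, y}.
   At an endpoint x, if another vertex x' of the part of x lies on the side of
   x, then x' is not an endpoint and has the same degrees as x. Otherwise x is
   alone on its side within its part, so at least r - 1 >= 5 of its part lie
   on the other side; balancedness then forces more than half of the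
   neighbours of x onto its own side, so x could not even be good in G - xy. *)

Section CrossingSubgraph.
Variable T : finType.
Implicit Types (g h : rel T) (A : {set T}) (u v x y : T).

Definition good_at g h v := (deg g v).-1 <= 2 * deg h v.

Definition cross A g : rel T := fun u v => g u v && ((u \in A) != (v \in A)).

Definition balanced A := (#|A| <= #|~: A|.+1) && (#|~: A| <= #|A|.+1).

Lemma eq_deg g1 g2 : g1 =2 g2 -> deg g1 =1 deg g2.
Proof. by move=> eq12 v; apply: eq_card => u; rewrite !inE eq12. Qed.

Lemma deg_subrel g1 g2 v :
  (forall u, g1 v u -> g2 v u) -> deg g1 v <= deg g2 v.
Proof. by move=> sub12; apply/subset_leq_card/subsetP => u; rewrite !inE; apply: sub12. Qed.

Lemma eq_good g1 g2 h : g1 =2 g2 -> good g1 h -> good g2 h.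
Proof. by move=> eq12 hgood v; rewrite -(eq_deg eq12). Qed.

Lemma eq_is_bisection g1 g2 h A :
  g1 =2 g2 -> is_bisection g1 h A -> is_bisection g2 h A.
Proof. by move=> eq12 [[hC hg] hA AC CA]; split=> //; split=> // u v /hg; rewrite eq12. Qed.

Lemma balanced_is_bisection g h A : is_bisection g h A -> balanced A.
Proof. by case=> _ _ AC CA; apply/andP. Qed.

Lemma cross_is_bisection g A : symmetric g -> balanced A -> is_bisection g (cross A g) A.
Proof.
move=> gC /andP[AC CA]; split=> //; last by move=> u v /andP[].
by split=> [u v | u v /andP[]] //; rewrite /cross gC eq_sym.
Qed.

Lemma deg_le_cross g h A v : is_bisection g h A -> deg h v <= deg (cross A g) v.
Proof. by case=> [[_ hg] hA _ _]; apply: deg_subrel => u huv; rewrite /cross hg // hA. Qed.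

Lemma del_edgeC g x y : del_edge g x y =2 del_edge g y x.
Proof. by move=> u v; rewrite /del_edge orbC. Qed.

Lemma deg_del_edge_le g x y v : deg (del_edge g x y) v <= deg g v.
Proof. by apply: deg_subrel => u /andP[]. Qed.

Lemma deg_del_edge_other g x y v :
  v != x -> v != y -> deg (del_edge g x y) v = deg g v.
Proof.
move=> vx vy; apply: eq_card => u.
by rewrite !inE /del_edge (negbTE vx) (negbTE vy) andbT.
Qed.

Lemma deg_del_edge g x y : g x y -> x != y -> deg g x = (deg (del_edge g x y) x).+1.
Proof.
move=> gxy xy; rewrite /deg (cardsD1 y) inE gxy add1n; congr _.+1.
by apply: eq_card => u; rewrite !inE /del_edge eqxx (negbTE xy) /= orbF andbC.
Qed.

Lemma cross_del_edge A g x y : cross A (del_edge g x y) =2 del_edge (cross A g) x y.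
Proof. by move=> u v; rewrite /cross /del_edge andbAC. Qed.

Lemma good_at_cross_del_edge_other g h A x y v :
  is_bisection (del_edge g x y) h A -> good (del_edge g x y) h ->
  v != x -> v != y -> good_at g (cross A g) v.
Proof.
move=> hbis hgood vx vy; rewrite /good_at -(deg_del_edge_other g vx vy).
apply: leq_trans (hgood v) _; rewrite leq_mul2l; apply/orP; right.
rewrite (leq_trans (deg_le_cross v hbis)) // (eq_deg (cross_del_edge A g x y)).
exact: deg_del_edge_le.
Qed.

End CrossingSubgraph.

Section CompleteMultipartite.
Variables (k : nat) (r : 'I_k -> nat).
Local Notation V := (Kmp_vertex r).
Local Notation G := (Kmp r).
Implicit Types (h : rel V) (A : {set V}) (u v x y : V).

Lemma Kmp_sym : symmetric G.
Proof. by move=> u v; rewrite /Kmp eq_sym. Qed.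

Lemma Kmp_neq x y : G x y -> x != y.
Proof. by apply: contra_neq => ->. Qed.

Lemma card_Kmp_part i : r i <= #|[set u : V | tag u == i]|.
Proof.
have inj_part : injective (Tagged (fun i => 'I_(r i)) (i := i)).
  move=> j1 j2 /(congr1 (tagged_as (Tagged (fun i => 'I_(r i)) j1))).
  by rewrite !tagged_asE.
rewrite -[r i]card_ord -cardsT -(card_imset _ inj_part).
by apply/subset_leq_card/subsetP => u /imsetP[j _ ->]; rewrite inE.
Qed.

Lemma good_at_twin A x x' : tag x' = tag x -> (x' \in A) = (x \in A) ->
  good_at G (cross A G) x' -> good_at G (cross A G) x.
Proof.
move=> tx Ax; rewrite /good_at.
have -> : deg G x' = deg G x by apply: eq_card => u; rewrite !inE /Kmp tx.
have -> // : deg (cross A G) x' = deg (cross A G) x.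
by apply: eq_card => u; rewrite !inE /cross /Kmp tx Ax.
Qed.

Lemma deg_cross_lonely A x : balanced A -> 6 <= r (tag x) ->
  (forall u, tag u = tag x -> (u \in A) = (x \in A) -> u = x) ->
  2 * deg (cross A G) x + 2 < deg G x.
Proof.
move=> /andP[AC CA] r6 lonely.
set P := [set u : V | tag u == tag x].
set S := [set u : V | (u \in A) == (x \in A)].
have PS1 : #|P :&: S| <= 1.
  rewrite -(cards1 x); apply/subset_leq_card/subsetP => u.
  by rewrite !inE => /andP[/eqP /lonely Pu /eqP /Pu ->].
have degG : deg G x = #|~: P| by apply: eq_card => u; rewrite !inE /Kmp eq_sym.
have degC : deg (cross A G) x = #|~: P :&: ~: S|.
  apply: eq_card => u; rewrite !inE /cross /Kmp eq_sym.
  by case: (tag u == tag x); case: (x \in A); case: (u \in A).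
have splitP (X Y : {set V}) : #|X| = #|Y :&: X| + #|~: Y :&: X|.
  by rewrite setIC [~: Y :&: _]setIC -setDE cardsID.
have SA : (#|S| = #|A| /\ #|~: S| = #|~: A|) \/ (#|S| = #|~: A| /\ #|~: S| = #|A|).
  case xA: (x \in A); [left | right].
    by have -> : S = A by apply/setP => u; rewrite !inE xA eqb_id.
  have -> : S = ~: A by apply/setP => u; rewrite !inE xA eqbF_neg.
  by rewrite setCK.
have := card_Kmp_part (tag x); rewrite -/P (splitP P S) !(setIC _ P).
have := splitP (~: P) S; have := splitP S P; have := splitP (~: S) P.
rewrite degG degC (setIC S) !(setIC (~: S)); lia.
Qed.

Lemma good_at_cross_endpoint h A x y : (forall i, 6 <= r i) -> G x y ->
  is_bisection (del_edge G x y) h A -> good (del_edge G x y) h ->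
  good_at G (cross A G) x.
Proof.
move=> r6 Gxy hbis hgood.
case: (pickP [pred u | [&& tag u == tag x, (u \in A) == (x \in A) & u != x]]).
  move=> x' /and3P[/eqP tx /eqP Ax x'x]; apply: (good_at_twin tx Ax).
  apply: good_at_cross_del_edge_other hbis hgood x'x _.
  by apply: contra_neq Gxy => <-.
move=> twinless; exfalso.
have lonely u : tag u = tag x -> (u \in A) = (x \in A) -> u = x.
  move=> tu Au; apply/eqP; have := twinless u; rewrite /= tu Au !eqxx /=.
  by move/negbT; rewrite negbK.
have := deg_cross_lonely (balanced_is_bisection hbis) (r6 _) lonely.
have := hgood x; have := deg_le_cross x hbis.
have := deg_del_edge_le (cross A G) x y x.
rewrite -(eq_deg (cross_del_edge A G x y)) (deg_del_edge Gxy (Kmp_neq Gxy)).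
lia.
Qed.

End CompleteMultipartite.

Theorem proposition3p4 (k : nat) (r : 'I_k -> nat) :
  (forall i, 7 <= r i) ->
  ~ has_good_bisection (Kmp r) ->
  forall x y : Kmp_vertex r, Kmp r x y ->
    ~ has_good_bisection (del_edge (Kmp r) x y).
Proof.
move=> r7 noGood x y Gxy [h [A [hbis hgood]]]; apply: noGood.
have r6 i : 6 <= r i by exact: ltnW.
exists (cross A (Kmp r)), A; split.
  exact: cross_is_bisection (@Kmp_sym _ r) (balanced_is_bisection hbis).
move=> v; have [->|vx] := eqVneq v x; first exact: good_at_cross_endpoint hbis hgood.
have [->|vy] := eqVneq v y; last exact: good_at_cross_del_edge_other hbis hgood vx vy.
have Gyx : Kmp r y x by rewrite Kmp_sym.
exact: good_at_cross_endpoint r6 Gyx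
  (eq_is_bisection (del_edgeC _ x y) hbis) (eq_good (del_edgeC _ x y) hgood).
Qed.
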